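(* Let $X$ be a set, $F:\mathcal{P}(X)\to\mathcal{P}(X)$ an interior operator, and $\kappa$ a cardinal. If the complete sup-lattice $(\mathbf{Fix}(F),\subseteq,\bigcup)$ has a basis indexed by a set of cardinality $\kappa$, then $F$ has a resolution whose interpolant $Y$ has cardinality $\kappa$, i.e. there exist a set $Y$ with $|Y|=\kappa$ and a relation $r\subseteq X\times Y$ such that $F=\langle r\rangle\circ[r^{\sim}]$.
   Context: An interior operator on $\mathcal{P}(X)$ is a map $F$ that is monotonic, contractive ($F(U)\subseteq U$), and satisfies $F(U)\subseteq F(F(U))$; $\mathbf{Fix}(F)=\{U\subseteq X\mid F(U)=U\}$, which is closed under arbitrary unions. A basis of a complete sup-lattice $(L,\leq,\bigvee)$ is a family $(x_i)_{i\in I}$ of elements of $L$ such that for every $y\in L$, $y=\bigvee\{x_i\mid x_i\leq y\}$; it is indexed by $I$. For $r\subseteq X\times Y$, $r^{\sim}=\{(y,x)\mid (x,y)\in r\}$. For $t\subseteq A\times B$, $\langle t\rangle,[t]:\mathcal{P}(B)\to\mathcal{P}(A)$ are $\langle t\rangle(V)=\{a\mid \exists b,\ (a,b)\in t\wedge b\in V\}$ and $[t](V)=\{a\mid \forall b,\ (a,b)\in t\Rightarrow b\in V\}$. *)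

From mathcomp Require Import all_boot.
From mathcomp Require Import boolp classical_sets.
Set Implicit Arguments. Unset Strict Implicit. Unset Printing Implicit Defensive.
Local Open Scope classical_set_scope.

Definition interior_operator (X : Type) (F : set X -> set X) : Prop :=
  [/\ (forall U V : set X, U `<=` V -> F U `<=` F V),
      (forall U : set X, F U `<=` U) &
      (forall U : set X, F U `<=` F (F U))].

Definition Fix (X : Type) (F : set X -> set X) : set (set X) :=
  [set U | F U = U].

Definition is_basis_Fix (X I : Type) (F : set X -> set X) (b : I -> set X) : Prop :=
  (forall i, Fix F (b i)) /\
  (forall y : set X, Fix F y -> y = \bigcup_(i in [set i | b i `<=` y]) b i).

Definition conv (A B : Type) (r : A -> B -> Prop) : B -> A -> Prop :=
  fun b a => r a b.

Definition diamond (A B : Type) (t : A -> B -> Prop) (V : set B) : set A :=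
  [set a | exists b, t a b /\ V b].
Definition box (A B : Type) (t : A -> B -> Prop) (V : set B) : set A :=
  [set a | forall b, t a b -> V b].

(* Take the basis itself as interpolant, with the membership relation
   x r i :<-> x \in b i.  Then <r>[r~] U is the union of the basis elements
   contained in U.  Since F U is a fixpoint and a fixpoint lies in U exactly
   when it lies in F U, this union is the basis decomposition of F U. *)
From mathcomp Require Import all_boot.
From mathcomp Require Import boolp classical_sets.
Set Implicit Arguments.
Unset Strict Implicit.
Unset Printing Implicit Defensive.

Local Open Scope classical_set_scope.

Definition mem_rel (X I : Type) (b : I -> set X) : X -> I -> Prop :=
  fun x i => b i x.

Lemma diamond_box_mem_rel (X I : Type) (b : I -> set X) (U : set X) :
  diamond (mem_rel b) (box (conv (mem_rel b)) U) =
  \bigcup_(i in [set i | b i `<=` U]) b i.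
Proof.
by apply/seteqP; split=> x; [case=> i [? ?] | case=> i ? ?]; exists i.
Qed.

Section InteriorOperator.
Variables (X : Type) (F : set X -> set X).
Hypothesis intF : interior_operator F.

Lemma Fix_interior (U : set X) : Fix F (F U).
Proof.
case: intF => _ contr idem.
by apply/seteqP; split=> x; [apply: contr | apply: idem].
Qed.

Lemma Fix_sub_interior (U V : set X) : Fix F V -> (V `<=` U <-> V `<=` F U).
Proof.
case: intF => mono contr _; rewrite /Fix /= => FV.
split=> VU; last by move=> x /VU /contr.
by rewrite -FV; apply: mono.
Qed.

Lemma interior_basis_resolution (I : Type) (b : I -> set X) :
  is_basis_Fix F b -> F = (fun U => diamond (mem_rel b) (box (conv (mem_rel b)) U)).
Proof.
move=> [bFix bjoin]; apply: funext => U.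
rewrite diamond_box_mem_rel {1}(bjoin _ (Fix_interior U)).
by congr bigcup; apply/seteqP; split=> i /=; case: (Fix_sub_interior U (bFix i)).
Qed.

End InteriorOperator.

Theorem corollary2 (X I : Type) (F : set X -> set X) :
  interior_operator F ->
  (exists b : I -> set X, is_basis_Fix F b) ->
  exists (Y : Type) (f : I -> Y), bijective f /\
    exists r : X -> Y -> Prop,
      F = (fun U : set X => diamond r (box (conv r) U)).
Proof.
move=> intF [b bbasis].
exists I, id; split; first by exists id.
by exists (mem_rel b); apply: interior_basis_resolution.
Qed.
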